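(* Let $\mathbf{B}$ be a commutative unital ring and $n\ge0$. The formulae $$A_n(X)=\bigoplus_{\substack{\#A=X\\|A|=n}}A,\qquad A_n(P)=\sum_{d}\ \prod_{p}\overline p^{\,d_p}\begin{bmatrix}x_p\\ y_p\end{bmatrix}^{[d_p]}$$ define a linear functor $A_n\colon\mathfrak{Laby}\to\mathfrak{MSet}_n$. Here $X$ is a finite set, $A$ ranges over multi-sets of cardinality $n$ with support exactly $X$, $P$ is a maze whose passage occurrences are $p\colon x_p\to y_p$, and $d$ ranges over assignments of integers $d_p\ge1$ to the passage occurrences with $\sum_pd_p=n$.
   Context: Multi-sets: finite sets with positive integer multiplicities; $|A|$ is the sum of multiplicities and $\#A$ the support. For $|A|=|B|=n$, a multation $\mu\colon A\to B$ is a multi-set of pairs $(a,b)$ whose multi-set of first coordinates is $A$ and of second coordinates is $B$. $\mathfrak{MSet}_n$: objects formal finite direct sums of multi-sets of cardinality $n$; $\mathfrak{MSet}_n(A,B)$ free $\mathbf{B}$-module on multations $A\to B$; composition of $\nu\colon A\to B$, $\mu\colon B\to C$: $\mu\circ\nu=\sum_K\frac{\prod_{(a,c)}m_{K_{13}}(a,c)!}{\prod_{(a,b,c)}m_K(a,b,c)!}K_{13}$, summed over multi-sets $K$ of triples whose $(1,2)$-projection is $\nu$ and $(2,3)$-projection is $\mu$ ($m$ = multiplicity). For distinct pairs, $\prod_j[a_j;b_j]^{[m_j]}$ denotes the multation containing $(a_j,b_j)$ with multiplicity $m_j$, with the rule $[a;b]^{[i]}[a;b]^{[j]}=\binom{i+j}i[a;b]^{[i+j]}$;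 thus each term of $A_n(P)$ is a scalar multiple of a multation from a multi-set with support $X$ to one with support $Y$, i.e. a morphism $A_n(X)\to A_n(Y)$. Mazes: a passage $p\colon x\to y$ between elements of finite sets carries a label $\overline p\in\mathbf{B}$; a maze $P\colon X\to Y$ is a finite multi-set of passages such that every element of $X$ is a source and every element of $Y$ a target of some passage. $\mathfrak{Laby}$: objects formal finite direct sums of finite sets; $\mathfrak{Laby}(X,Y)$ the $\mathbf{B}$-module generated by mazes $X\to Y$ modulo (I) $P\cup\{x\xrightarrow0y\}=0$ and (II) $P\cup\{x\xrightarrow{a+b}y\}=P\cup\{x\xrightarrow ay\}+P\cup\{x\xrightarrow by\}+P\cup\{x\xrightarrow ay,x\xrightarrow by\}$ (for multi-sets $P$ of passages); composition $P\circ Q=\sum_{U\sqsubseteq P\boxtimes Q}U$, where $U$ runs over sub-multi-sets of the multi-set of composable pairs ($q\colon x\to y\in Q$, $p\colon y\to z\in P$) using every passage occurrence of $P$ and of $Q$, $U$ being read as the maze with passages $x\xrightarrow{\overline p\overline q}z$. *)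

From HB Require Import structures.
From mathcomp Require Import all_boot all_algebra.
Set Implicit Arguments. Unset Strict Implicit. Unset Printing Implicit Defensive.
Import GRing.Theory.

Section MazeFunctor.
Variable R : comPzRingType.
Variable n : nat.

Definition mpairs (X Y : finType) := {ffun X * Y -> 'I_n.+1}.

Definition rowsum (X Y : finType) (m : X * Y -> nat) (x : X) : nat :=
  (\sum_(y : Y) m (x, y))%N.
Definition colsum (X Y : finType) (m : X * Y -> nat) (y : Y) : nat :=
  (\sum_(x : X) m (x, y))%N.

(* mu is a multation A -> B between multi-sets of cardinality n whose
   supports are exactly X and Y (A, B are its two projections). *)
Definition is_multation (X Y : finType) (mu : mpairs X Y) : bool :=
  [&& (\sum_(xy : X * Y) (mu xy : nat) == n)%N,
      [forall x : X, 0 < rowsum (fun xy => (mu xy : nat)) x]%N &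
      [forall y : Y, 0 < colsum (fun xy => (mu xy : nat)) y]%N].

Definition multation (X Y : finType) := {mu : mpairs X Y | is_multation mu}.

(* Hom(A_n(X), A_n(Y)) = (+)_{A,B} MSet_n(A,B), i.e. the free B-module on
   all multations between a multi-set with support X and one with support Y. *)
Definition Hom (X Y : finType) := {ffun multation X Y -> R}.

Definition agrees (X Y : finType) (m : X * Y -> nat) (mu : multation X Y) : bool :=
  [forall xy : X * Y, m xy == (val mu xy : nat)].

Definition mtriples (X Y Z : finType) := {ffun X * Y * Z -> 'I_n.+1}.
Definition proj12 (X Y Z : finType) (K : mtriples X Y Z) : X * Y -> nat :=
  fun xy => (\sum_(z : Z) (K (xy.1, xy.2, z) : nat))%N.
Definition proj23 (X Y Z : finType) (K : mtriples X Y Z) : Y * Z -> nat :=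
  fun yz => (\sum_(x : X) (K (x, yz.1, yz.2) : nat))%N.
Definition proj13 (X Y Z : finType) (K : mtriples X Y Z) : X * Z -> nat :=
  fun xz => (\sum_(y : Y) (K (xz.1, y, xz.2) : nat))%N.

(* prod_{(a,c)} m_{K13}(a,c)! / prod_{(a,b,c)} m_K(a,b,c)!  (an exact division) *)
Definition mcoef (X Y Z : finType) (K : mtriples X Y Z) : nat :=
  ((\prod_(xz : X * Z) (proj13 K xz)`!) %/ (\prod_(t : X * Y * Z) (K t : nat)`!))%N.

Definition mcomp (X Y Z : finType) (f : Hom X Y) (g : Hom Y Z) : Hom X Z :=
  [ffun rho : multation X Z =>
     (\sum_(nu : multation X Y) \sum_(mu : multation Y Z)
       \sum_(K : mtriples X Y Z |
               [&& agrees (proj12 K) nu, agrees (proj23 K) mu & agrees (proj13 K) rho])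
          ((mcoef K)%:R * f nu * g mu))%R].

Definition mid (X : finType) : Hom X X :=
  [ffun mu : multation X X =>
     if [forall xy : X * X, (xy.1 != xy.2) ==> ((val mu xy : nat) == 0%N)]
     then 1%R else 0%R].

Definition passage (X Y : finType) := (X * Y * R)%type.

(* a maze is a finite multi-set of passages (represented by a list, up to
   permutation) in which every x is a source and every y a target *)
Definition is_maze (X Y : finType) (P : seq (passage X Y)) : bool :=
  [forall x : X, has (fun p : passage X Y => p.1.1 == x) P] &&
  [forall y : Y, has (fun p : passage X Y => p.1.2 == y) P].

(* The multi-set of pairs prod_p [x_p;y_p]^{[d_p]} (as a nat-valued function) *)
Definition dmult (X Y : finType) (P : seq (passage X Y))
    (d : {ffun 'I_(size P) -> 'I_n.+1}) : X * Y -> nat :=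
  fun xy => (\sum_(i : 'I_(size P) | (tnth (in_tuple P) i).1 == xy) (d i : nat))%N.

(* scalar from the rule [a;b]^{[i]}[a;b]^{[j]} = C(i+j,i)[a;b]^{[i+j]}:
   prod_{(x,y)} (sum_{p : x->y} d_p)! / prod_p d_p!  (exact division) *)
Definition dcoef (X Y : finType) (P : seq (passage X Y))
    (d : {ffun 'I_(size P) -> 'I_n.+1}) : nat :=
  ((\prod_(xy : X * Y) (dmult d xy)`!) %/ (\prod_(i : 'I_(size P)) (d i : nat)`!))%N.

Definition An (X Y : finType) (P : seq (passage X Y)) : Hom X Y :=
  [ffun mu : multation X Y =>
     (\sum_(d : {ffun 'I_(size P) -> 'I_n.+1} |
             [&& [forall i, 0 < (d i : nat)]%N,
                 (\sum_(i : 'I_(size P)) (d i : nat) == n)%N &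
                 agrees (dmult d) mu])
       ((\prod_(i : 'I_(size P)) (tnth (in_tuple P) i).2 ^+ (d i : nat)) * (dcoef d)%:R))%R].

(* U : set of composable pairs (occurrence i of Q, occurrence j of P) using
   every passage occurrence of P and of Q *)
Definition lvalid (X Y Z : finType) (Q : seq (passage X Y)) (P : seq (passage Y Z))
    (U : {set 'I_(size Q) * 'I_(size P)}) : bool :=
  [&& [forall ij in U, (tnth (in_tuple Q) ij.1).1.2 == (tnth (in_tuple P) ij.2).1.1],
      [forall i : 'I_(size Q), exists j : 'I_(size P), (i, j) \in U] &
      [forall j : 'I_(size P), exists i : 'I_(size Q), (i, j) \in U]].

Definition umaze (X Y Z : finType) (Q : seq (passage X Y)) (P : seq (passage Y Z))
    (U : {set 'I_(size Q) * 'I_(size P)}) : seq (passage X Z) :=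
  [seq ((tnth (in_tuple Q) ij.1).1.1, (tnth (in_tuple P) ij.2).1.2,
        ((tnth (in_tuple P) ij.2).2 * (tnth (in_tuple Q) ij.1).2)%R) | ij <- enum U].

(* A_n applied (linearly) to P o Q = sum_U U *)
Definition An_comp (X Y Z : finType) (Q : seq (passage X Y)) (P : seq (passage Y Z))
    : Hom X Z :=
  (\sum_(U : {set 'I_(size Q) * 'I_(size P)} | lvalid U) An (umaze U))%R.

Definition lid (X : finType) : seq (passage X X) := [seq (x, x, 1%R) | x <- enum X].

End MazeFunctor.

(* List the n points of a multation mu as g : 'I_n -> X * Y.  The scalar dcoef d of A_n(P)
   is the multinomial number of ways to hand out the n points to the passage occurrences of P,
   d_p of them to p, each point going to an occurrence with its own endpoints.  Hence the
   coefficient of A_n(P) at mu is a sum over the maps f from 'I_n onto the occurrences of P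
   lying over g of the product of the labels of f.  In this labelled form every claim becomes
   a bijection between sets of maps: reordering P permutes occurrences; under a passage
   labelled a + b each point picks one of the two summands, and the maps missing one summand
   or hitting both give the three terms of relation (II); the identity maze has a single lift,
   of weight 1, exactly over diagonal multations; and lifts along a composite maze are pairs of
   composable lifts, which are counted on the other side by lifting g to triples, mcoef being
   once more a multinomial number of lifts. *)

From HB Require Import structures.
From mathcomp Require Import all_boot all_algebra fingroup perm.
Import GRing.Theory.

Set Implicit Arguments. Unset Strict Implicit. Unset Printing Implicit Defensive.

(** * Counting lifts of labellings *)

Definition fcount (T : finType) m (f : 'I_m -> T) (t : T) : nat :=
  \sum_(k < m) (f k == t).

Definition mset_of (T : finType) m (f : 'I_m -> T) : {ffun T -> 'I_m.+1} :=
  [ffun t => inord (fcount f t)].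

Definition ffcons (T : Type) m (a : T) (f : 'I_m -> T) : {ffun 'I_m.+1 -> T} :=
  [ffun k => if unlift ord0 k is Some k' then f k' else a].

Lemma ffcons0 (T : Type) m (a : T) (f : 'I_m -> T) : ffcons a f ord0 = a.
Proof. by rewrite ffunE unlift_none. Qed.

Lemma ffconsS (T : Type) m (a : T) (f : 'I_m -> T) k : ffcons a f (lift ord0 k) = f k.
Proof. by rewrite ffunE liftK. Qed.

Lemma fcount_card (T : finType) m (f : 'I_m -> T) t : fcount f t = #|[pred k | f k == t]|.
Proof. by rewrite /fcount -sum1_card [RHS]big_mkcond; apply: eq_bigr. Qed.

Lemma fcount_le (T : finType) m (f : 'I_m -> T) t : fcount f t <= m.
Proof. by rewrite fcount_card -[m in _ <= m]card_ord max_card. Qed.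

Lemma mset_ofE (T : finType) m (f : 'I_m -> T) t : mset_of f t = fcount f t :> nat.
Proof. by rewrite ffunE inordK // ltnS fcount_le. Qed.

Lemma fcount_gt0 (T : finType) m (f : 'I_m -> T) t :
  (0 < fcount f t) = [exists k, f k == t].
Proof. by rewrite fcount_card; apply/card_gt0P/existsP => -[k]; exists k. Qed.

Lemma fcount_recl (T : finType) m (f : 'I_m.+1 -> T) t :
  fcount f t = (f ord0 == t) + fcount (fun k => f (lift ord0 k)) t.
Proof. by rewrite /fcount big_ord_recl. Qed.

Lemma fcount_ffcons (T : finType) m (a : T) (f : 'I_m -> T) t :
  fcount (ffcons a f) t = (a == t) + fcount f t.
Proof. by rewrite fcount_recl ffcons0; congr (_ + _); apply: eq_bigr => k _; rewrite ffconsS. Qed.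

Lemma sum_eq_pred (T : finType) (P : pred T) (a : T) : \sum_(t | P t) (a == t) = P a.
Proof.
case Pa: (P a); last by rewrite big1 // => t Pt; case: eqP Pt => // <-; rewrite Pa.
by rewrite (bigD1 a) //= eqxx big1 // => t /andP[_ /negbTE]; rewrite eq_sym => ->.
Qed.

Lemma sum_ffun_ord_recl (T : finType) m (F : {ffun 'I_m.+1 -> T} -> nat) :
  \sum_(f : {ffun 'I_m.+1 -> T}) F f = \sum_(a : T) \sum_(f : {ffun 'I_m -> T}) F (ffcons a f).
Proof.
rewrite pair_bigA (reindex (fun p : T * {ffun 'I_m -> T} => ffcons p.1 p.2)) //=.
exists (fun f : {ffun 'I_m.+1 -> T} => (f ord0, [ffun k => f (lift ord0 k)])).
- move=> [a f] _ /=; rewrite ffcons0; congr (_, _).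
  by apply/ffunP => k; rewrite ffunE ffconsS.
- move=> f _; apply/ffunP => k; rewrite ffunE.
  by case: unliftP => [j ->|->]; rewrite ?ffunE.
Qed.

Lemma prod_fact_decr (A : finType) (K : A -> nat) a : 0 < K a ->
  \prod_t (K t)`! = K a * \prod_t (K t - (a == t))`!.
Proof.
move=> K_gt0; rewrite (bigD1 a) //= [in RHS](bigD1 a) //= eqxx subn1.
rewrite -(prednK K_gt0) factS prednK // -mulnA; congr (_ * (_ * _)).
by apply: eq_bigr => t; rewrite eq_sym => /negbTE ->; rewrite subn0.
Qed.

Section Lifts.
Variables (A B : finType) (pi : A -> B).

Definition nlifts m (h : 'I_m -> B) (K : A -> nat) : nat :=
  #|[pred f : {ffun 'I_m -> A} | [forall k, pi (f k) == h k] &&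
                                 [forall a, fcount f a == K a]]|.

Definition multinomial (K : A -> nat) : nat :=
  (\prod_b (\sum_(a | pi a == b) K a)`!) %/ \prod_a (K a)`!.

Lemma nlifts_recl m (h : 'I_m.+1 -> B) K :
  nlifts h K = \sum_(a | (pi a == h ord0) && (0 < K a))
                 nlifts (fun k => h (lift ord0 k)) (fun t => K t - (a == t)).
Proof.
rewrite /nlifts -sum1_card big_mkcond sum_ffun_ord_recl [RHS]big_mkcond /=.
apply: eq_bigr => a _; case: ifP => [/andP [/eqP ha Ka_gt0]|Ha].
  rewrite -sum1_card [RHS]big_mkcond /=; apply: eq_bigr => f _ /=.
  congr (if _ then _ else _); congr (_ && _).
    apply/forallP/forallP => H k; first by have := H (lift ord0 k); rewrite ffconsS.
    by rewrite ffunE; case: unliftP => [j ->|->]; [exact: H | rewrite ha].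
  apply/forallP/forallP => H t; have := H t; rewrite ?fcount_ffcons => /eqP E.
    by rewrite -E addKn.
  by rewrite E subnKC //; case: eqP => // <-.
apply: big1 => f _; case: ifP => // /andP [/forallP H1 /forallP H2]; exfalso.
move/negbT: Ha; rewrite negb_and -leqNgt leqn0 => /orP [/negP[]|/eqP Ka0].
  by have := H1 ord0; rewrite ffcons0.
by have := H2 a; rewrite fcount_ffcons eqxx Ka0.
Qed.

Lemma nlifts_mul_fact m (h : 'I_m -> B) (K : A -> nat) :
  (forall b, \sum_(a | pi a == b) K a = fcount h b) ->
  nlifts h K * \prod_a (K a)`! = \prod_b (fcount h b)`!.
Proof.
elim: m h K => [|m IH] h K hK.
  have K0 a : K a = 0.
    apply/eqP; have := hK (pi a); rewrite /fcount big_ord0 => /eqP.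
    by rewrite sum_nat_eq0 => /forallP /(_ a); rewrite eqxx.
  rewrite (eq_bigr (fun _ => 1)) => [|a _]; last by rewrite K0.
  rewrite [RHS](eq_bigr (fun _ => 1)) => [|b _]; last by rewrite /fcount big_ord0.
  rewrite !big1_eq muln1 /nlifts (eq_card (B := {ffun 'I_0 -> A})) => [|f].
    by rewrite card_ffun card_ord.
  by rewrite !inE; apply/andP; split; apply/forallP; [case | move=> a; rewrite /fcount big_ord0 K0].
pose h' k := h (lift ord0 k).
have fcount_h b : fcount h b = (h ord0 == b) + fcount h' b by rewrite fcount_recl.
rewrite nlifts_recl big_distrl /=.
rewrite (eq_bigr (fun a => \prod_b (fcount h' b)`! * K a)) => [|a /andP [/eqP ha Ka_gt0]].
  rewrite -big_distrr /=.
  have -> : \sum_(a | (pi a == h ord0) && (0 < K a)) K a = fcount h (h ord0).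
    rewrite -hK [RHS](bigID (fun a => 0 < K a)) /= [X in _ = _ + X]big1 ?addn0 //.
    by move=> a /andP [_]; rewrite -leqNgt leqn0 => /eqP.
  rewrite [RHS](bigD1 (h ord0)) //= [X in X * _](bigD1 (h ord0)) //=.
  rewrite fcount_h eqxx add1n factS (eq_bigr (fun b => (fcount h b)`!)) => [|b /negbTE hb].
    by rewrite mulnC mulnA.
  by rewrite fcount_h eq_sym hb.
rewrite (prod_fact_decr Ka_gt0) mulnCA IH 1?mulnC // => b.
rewrite sumnB => [|t _]; last by case: eqP => // <-.
by rewrite hK sum_eq_pred fcount_h ha addKn.
Qed.

Lemma nlifts_multinomial m (h : 'I_m -> B) (K : A -> nat) :
  (forall b, \sum_(a | pi a == b) K a = fcount h b) -> nlifts h K = multinomial K.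
Proof.
move=> hK; rewrite /multinomial (eq_bigr _ (fun b _ => congr1 factorial (hK b))).
by rewrite -(nlifts_mul_fact hK) mulnK // prodn_gt0 // => a; rewrite fact_gt0.
Qed.

Lemma fcount_push m (f : 'I_m -> A) b :
  \sum_(a | pi a == b) fcount f a = fcount (fun k => pi (f k)) b.
Proof.
rewrite /fcount exchange_big /=; apply: eq_bigr => k _.
exact: (sum_eq_pred (fun a => pi a == b)).
Qed.

Lemma sum_lifts_mset (V : nmodType) m (h : 'I_m -> B) (G : {ffun A -> 'I_m.+1} -> V) :
  (\sum_(f : {ffun 'I_m -> A} | [forall k, pi (f k) == h k]) G (mset_of f) =
   \sum_(K : {ffun A -> 'I_m.+1} | [forall b, (\sum_(a | pi a == b) K a)%N == fcount h b])
      G K *+ multinomial (fun a => K a))%R.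
Proof.
rewrite (partition_big (fun f : {ffun 'I_m -> A} => mset_of f) (fun K : {ffun A -> 'I_m.+1} =>
          [forall b, \sum_(a | pi a == b) K a == fcount h b])) => [|f /forallP hf]; last first.
  apply/forallP => b; rewrite (eq_bigr _ (fun a _ => mset_ofE f a)) fcount_push.
  by apply/eqP/eq_bigr => k _; rewrite (eqP (hf k)).
apply: eq_bigr => K /forallP hK.
rewrite (eq_bigr (fun _ => G K)) => [|f /andP [_ /eqP ->] //].
rewrite sumr_const -(nlifts_multinomial (fun b => eqP (hK b))); congr (_ *+ _)%R.
apply: eq_card => f; rewrite !inE; congr (_ && _).
apply/eqP/forallP => [<- a|hf]; first by rewrite mset_ofE.
by apply/ffunP => a; apply/val_inj; rewrite /= mset_ofE; apply/eqP.
Qed.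

End Lifts.

Lemma exists_labelling (T : finType) m (mu : T -> nat) :
  \sum_t mu t = m -> exists g : 'I_m -> T, forall t, fcount g t = mu t.
Proof.
elim: m mu => [|m IH] mu mu_sum.
  have g0 : 'I_0 -> T by case=> k; rewrite ltn0.
  exists g0 => t; rewrite /fcount big_ord0; apply/esym/eqP.
  by move/eqP: mu_sum; rewrite sum_nat_eq0 => /forallP /(_ t).
have [t0 mu_t0|mu0] := pickP (fun t => 0 < mu t); last first.
  by move: mu_sum; rewrite big1 // => t _; apply/eqP; rewrite -leqn0 leqNgt mu0.
have [|g g_mu] := IH (fun t => mu t - (t0 == t)).
  rewrite sumnB => [|t _]; last by case: eqP => // <-.
  by rewrite mu_sum (sum_eq_pred xpredT) subn1.
exists (ffcons t0 g) => t; rewrite fcount_ffcons g_mu subnKC //.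
by case: eqP => // <-.
Qed.

Lemma fcount_sum (T : finType) m (f : 'I_m -> T) : \sum_t fcount f t = m.
Proof.
rewrite /fcount exchange_big /= -[RHS]card_ord -sum1_card.
by apply: eq_bigr => k _; exact: (sum_eq_pred xpredT).
Qed.

Lemma prod_fcount (R : comPzRingType) (T : finType) m (f : 'I_m -> T) (F : T -> R) :
  (\prod_k F (f k) = \prod_t F t ^+ fcount f t)%R.
Proof.
rewrite (partition_big f predT) //=; apply: eq_bigr => t _.
by rewrite (eq_bigr (fun _ => F t)) => [|k /eqP ->//]; rewrite prodr_const fcount_card.
Qed.

Lemma sum_ffun_comp_inj (V : nmodType) (I J : finType) (s : I -> J) m
    (F : {ffun 'I_m -> J} -> V) :
  injective s ->
  (\sum_(f : {ffun 'I_m -> I}) F [ffun k => s (f k)] =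
   \sum_(H : {ffun 'I_m -> J} | [forall k, H k \in codom s]) F H)%R.
Proof.
move=> s_inj.
rewrite (partition_big (fun f : {ffun 'I_m -> I} => [ffun k => s (f k)])
   (fun H : {ffun 'I_m -> J} => [forall k, H k \in codom s])) => [|f _]; last first.
  by apply/forallP => k; rewrite ffunE codom_f.
apply: eq_bigr => H /forallP H_s.
pose f0 := [ffun k => iinv (H_s k)].
have sf0 : [ffun k => s (f0 k)] = H by apply/ffunP => k; rewrite !ffunE f_iinv.
rewrite (big_pred1 f0) ?sf0 // => f /=; rewrite -sf0.
apply/eqP/eqP => [sf|->] //; apply/ffunP => k; apply: s_inj.
by have := congr1 (fun g : {ffun 'I_m -> J} => g k) sf; rewrite !ffunE.
Qed.

Lemma sum_ffun_pair (V : nmodType) (I J : finType) m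
    (T : {ffun 'I_m -> I} -> {ffun 'I_m -> J} -> V) :
  (\sum_(F : {ffun 'I_m -> I}) \sum_(G : {ffun 'I_m -> J}) T F G =
   \sum_(H : {ffun 'I_m -> I * J}) T [ffun k => (H k).1] [ffun k => (H k).2])%R.
Proof.
rewrite pair_bigA /= (reindex (fun H : {ffun 'I_m -> I * J} =>
   ([ffun k => (H k).1], [ffun k => (H k).2]))) //=.
exists (fun FG : {ffun 'I_m -> I} * {ffun 'I_m -> J} => [ffun k => (FG.1 k, FG.2 k)]).
  by move=> H _; apply/ffunP => k; rewrite !ffunE -surjective_pairing.
by move=> [F G] _; congr (_, _); apply/ffunP => k; rewrite !ffunE.
Qed.

Lemma prod_if (R : comPzRingType) (T : finType) (c : pred T) (v : T -> R) :
  (\prod_t (if c t then v t else 0) = if [forall t, c t] then \prod_t v t else 0)%R.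
Proof.
case: ifP => [/forallP c_all|/negbT]; first by apply: eq_bigr => t _; rewrite c_all.
by rewrite negb_forall => /existsP [t /negbTE ct]; rewrite (bigD1 t) //= ct mul0r.
Qed.

Lemma sum_if_eq (V : nmodType) (T : finType) (C : pred T) (t0 : T) (v : V) :
  (\sum_(t | C t) (if t == t0 then v else 0) = if C t0 then v else 0)%R.
Proof.
rewrite -big_mkcondr /=; case: ifP => C_t0.
  by rewrite (big_pred1 t0) // => t /=; case: eqP => [->|]; rewrite ?C_t0 ?andbF.
by rewrite big_pred0 // => t /=; case: eqP => [->|]; rewrite ?C_t0 ?andbF.
Qed.

Lemma sum_option (V : nmodType) (I : finType) (F : option I -> V) :
  (\sum_o F o = F None + \sum_i F (Some i))%R.
Proof.
rewrite (bigD1 None) //=; congr (_ + _)%R.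
rewrite -[RHS](big_imset _ (h := Some) (A := predT)) => [|i j _ _ [] //].
apply: eq_bigl => -[i|] /=; first by rewrite imset_f.
by apply/esym/imsetP => -[].
Qed.

(** * Relabelling passage occurrences *)

Lemma codom_Some (I : finType) (o : option I) : (o \in codom Some) = (o != None).
Proof. by apply/codomP/idP => [[o' ->] //|]; case: o => // o _; exists o. Qed.

Lemma codom_omap_Some (I : finType) (o : option (option I)) :
  (o \in codom (omap Some)) = (o != Some None).
Proof.
apply/codomP/idP => [[o' ->]|]; first by case: o'.
by case: o => [[i|]|] // _; [exists (Some i) | exists None].
Qed.

Local Notation occ P := (tnth (in_tuple P)).

Definition relabel (T I J : Type) (e : I -> T) (e' : J -> T) :=
  exists2 s : I -> J, bijective s & forall i, e' (s i) = e i.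

Definition oext (T I : Type) (q : T) (e : I -> T) (o : option I) : T :=
  if o is Some i then e i else q.

Lemma relabel_trans (T I J K : Type) (e1 : I -> T) (e2 : J -> T) (e3 : K -> T) :
  relabel e1 e2 -> relabel e2 e3 -> relabel e1 e3.
Proof.
case=> s1 s1_bij e21 [s2 s2_bij e32].
by exists (s2 \o s1) => [|i]; [exact: bij_comp | rewrite /= e32 e21].
Qed.

Lemma relabel_oext (T I J : Type) (q : T) (e : I -> T) (e' : J -> T) :
  relabel e e' -> relabel (oext q e) (oext q e').
Proof.
case=> s [s' ss' s's] e's; exists (omap s) => [|[i|] //=].
by exists (omap s') => -[i|] //=; rewrite ?ss' ?s's.
Qed.

Lemma relabel_cons (T : Type) (q : T) (P : seq T) :
  relabel (oext q (occ P)) (occ (q :: P)).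
Proof.
exists (fun o => if o is Some i then lift ord0 i else ord0) => [|[i|] /=].
- exists (unlift ord0) => [[i|]|k]; rewrite ?liftK ?unlift_none //.
  by case: unliftP.
- by rewrite !(tnth_nth q).
- by rewrite (tnth_nth q).
Qed.

Lemma relabel_perm (T : eqType) (P P' : seq T) : perm_eq P P' -> relabel (occ P) (occ P').
Proof.
move=> pP; have /tuple_permP [p P'E] : perm_eq P' (in_tuple P) by rewrite perm_sym.
have size_eq : size P = size P' by rewrite P'E size_tuple.
exists (fun i => cast_ord size_eq ((p^-1)%g i)) => [|i].
  by apply: inj_card_bij => [i j /cast_ord_inj /perm_inj //|]; rewrite !card_ord size_eq.
rewrite (tnth_nth (occ P i)) /= P'E -tnth_nth tnth_mktuple.
by rewrite permKV.
Qed.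

Lemma relabel_enum (T : Type) (I : finType) (A : {pred I}) (f : I -> T) :
  relabel (fun j : 'I_#|A| => f (enum_val j)) (occ [seq f i | i <- enum A]).
Proof.
have size_eq : #|A| = size [seq f i | i <- enum A] by rewrite size_map cardE.
exists (cast_ord size_eq) => [|j]; first exact: Bijective (cast_ordK _) (cast_ordKV _).
by rewrite (tnth_nth (f (enum_val j))) /= (nth_map (enum_val j)) -?cardE // -enum_val_nth.
Qed.

(** * The labelled form of A_n *)

Section Labelled.
Variables (R : comPzRingType) (n : nat).

Definition Alab (X Y I : finType) (e : I -> passage R X Y) (g : 'I_n -> X * Y) : R :=
  (\sum_(f : {ffun 'I_n -> I} | [forall k, (e (f k)).1 == g k] && [forall i, exists k, f k == i])
     \prod_k (e (f k)).2)%R.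

Lemma multation_sum (X Y : finType) (mu : multation n X Y) : \sum_xy (val mu xy : nat) = n.
Proof. by case/and3P: (valP mu) => /eqP. Qed.

Lemma An_Alab (X Y : finType) (P : seq (passage R X Y)) (mu : multation n X Y)
    (g : 'I_n -> X * Y) :
  (forall xy, fcount g xy = val mu xy) -> An n P mu = Alab (occ P) g.
Proof.
move=> g_mu; pose pi i := (occ P i).1.
pose G (K : {ffun 'I_(size P) -> 'I_n.+1}) :=
  (if [forall i, 0 < K i]%N then \prod_i (occ P i).2 ^+ K i else 0)%R.
have -> : Alab (occ P) g =
          (\sum_(f : {ffun 'I_n -> 'I_(size P)} | [forall k, pi (f k) == g k]) G (mset_of f))%R.
  rewrite /Alab big_mkcondr /= big_mkcond [RHS]big_mkcond /=; apply: eq_bigr => f _ /=.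
  case: ifP => // _; rewrite /G.
  have -> : [forall i, 0 < mset_of f i]%N = [forall i, exists k, f k == i].
    by apply: eq_forallb => i; rewrite mset_ofE fcount_gt0.
  case: ifP => // _; rewrite (prod_fcount f (fun i => (occ P i).2)).
  by apply: eq_bigr => i _; rewrite mset_ofE.
rewrite sum_lifts_mset ffunE big_mkcond [RHS]big_mkcond /=; apply: eq_bigr => d _.
have -> : agrees (dmult d) mu = [forall xy, (\sum_(i | pi i == xy) d i)%N == fcount g xy].
  by apply: eq_forallb => xy; rewrite g_mu.
case d_g: [forall xy, _]; last by rewrite !andbF.
have -> : (\sum_i (d i : nat) == n)%N.
  apply/eqP; rewrite -[RHS](fcount_sum g) (partition_big pi predT) //=.
  by apply: eq_bigr => xy _; apply/eqP; move/forallP: d_g.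
rewrite /G andbT; case: [forall i, _]; last by rewrite mul0rn.
by rewrite mulr_natr.
Qed.

Lemma Alab_relabel (X Y I J : finType) (e : I -> passage R X Y) (e' : J -> passage R X Y)
    (g : 'I_n -> X * Y) :
  relabel e e' -> Alab e' g = Alab e g.
Proof.
case=> s s_bij e's; have s_inj := bij_inj s_bij.
have s_onto j : j \in codom s by case: s_bij => s' _ ss'; rewrite -[j]ss' codom_f.
pose F (H : {ffun 'I_n -> J}) := (if [forall k, (e' (H k)).1 == g k] &&
   [forall j, exists k, H k == j] then \prod_k (e' (H k)).2 else 0)%R.
transitivity (\sum_(f : {ffun 'I_n -> I}) F [ffun k => s (f k)])%R.
  rewrite sum_ffun_comp_inj // /Alab big_mkcond [RHS]big_mkcond /=.
  apply: eq_bigr => H _; have -> // : [forall k, H k \in codom s].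
  by apply/forallP => k; exact: s_onto.
rewrite /Alab [RHS]big_mkcond /=; apply: eq_bigr => f _; rewrite /F.
have -> : [forall k, (e' ([ffun k => s (f k)] k)).1 == g k] = [forall k, (e (f k)).1 == g k].
  by apply: eq_forallb => k; rewrite ffunE e's.
have -> : [forall j, exists k, [ffun k => s (f k)] k == j] = [forall i, exists k, f k == i].
  apply/forallP/forallP => f_onto i.
    have/existsP [k /eqP fk] := f_onto (s i); apply/existsP; exists k.
    by rewrite ffunE in fk; rewrite (s_inj _ _ fk).
  have/codomP [i0 ->] := s_onto i; have/existsP [k /eqP fk] := f_onto i0.
  by apply/existsP; exists k; rewrite ffunE fk.
by case: ifP => // _; apply: eq_bigr => k _; rewrite ffunE e's.
Qed.

Lemma Alab_mul (X Y X' Y' I J : finType)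
    (e : I -> passage R X Y) (e' : J -> passage R X' Y') g g' :
  (Alab e g * Alab e' g' =
   \sum_(H : {ffun 'I_n -> I * J})
     if ([forall k, (e (H k).1).1 == g k] && [forall i, exists k, (H k).1 == i]) &&
        ([forall k, (e' (H k).2).1 == g' k] && [forall j, exists k, (H k).2 == j])
     then \prod_k (e (H k).1).2 * \prod_k (e' (H k).2).2 else 0)%R.
Proof.
pose T (F : {ffun 'I_n -> I}) (G : {ffun 'I_n -> J}) :=
  (if ([forall k, (e (F k)).1 == g k] && [forall i, exists k, F k == i]) &&
      ([forall k, (e' (G k)).1 == g' k] && [forall j, exists k, G k == j])
   then \prod_k (e (F k)).2 * \prod_k (e' (G k)).2 else 0)%R.
transitivity (\sum_F \sum_G T F G)%R.
  rewrite /Alab big_distrl big_mkcond [RHS]big_mkcond /=; apply: eq_bigr => F _.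
  rewrite /T; case: ifP => _ /=; last by rewrite big1.
  by rewrite big_distrr big_mkcond [RHS]big_mkcond /=; apply: eq_bigr.
rewrite sum_ffun_pair; apply: eq_bigr => H _; rewrite /T.
congr (if (_ && _) && (_ && _) then _ * _ else _)%R;
  do ?[apply: eq_forallb => i]; do ?[apply: eq_existsb => k]; do ?[apply: eq_bigr => k _];
  by rewrite ffunE.
Qed.

End Labelled.

Section LabelSplitting.
Variables (R : comPzRingType) (n : nat) (X Y I : finType).
Variables (e : I -> passage R X Y) (x : X) (y : Y) (a b : R) (g : 'I_n -> X * Y).
Local Open Scope ring_scope.

(* The passage labelled [a + b] is doubled: [None] is its [a]-copy, [Some None] its [b]-copy. *)
Local Notation eab := (oext (x, y, a) (oext (x, y, b) e)).
Local Notation Fun := {ffun 'I_n -> option (option I)}.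

Definition split_over (f : Fun) := [forall k, (eab (f k)).1 == g k].
Definition split_covers (f : Fun) := [forall i, exists k, obind id (f k) == i].
Definition split_term (f : Fun) :=
  if split_over f && split_covers f then \prod_k (eab (f k)).2 else 0.

Lemma eab_fst c o : (eab o).1 = (oext (x, y, c) e (obind id o)).1.
Proof. by case: o => [[i|]|]. Qed.

Lemma Alab_add_expand : Alab (oext (x, y, a + b) e) g = \sum_(f : Fun) split_term f.
Proof.
have label_add i : (oext (x, y, a + b) e i).2 =
    (\sum_o (if obind id o == i then (eab o).2 else 0))%R.
  rewrite !sum_option /=; case: i => [i|] /=.
    by rewrite !add0r -big_mkcond (big_pred1 i).
  by rewrite big1_eq addr0.
rewrite /Alab.
transitivity (\sum_(f : {ffun 'I_n -> option I} |
     [forall k, (oext (x, y, a + b) e (f k)).1 == g k] && [forall i, exists k, f k == i])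
   \sum_(f2 : Fun) (if f == [ffun k => obind id (f2 k)] then \prod_k (eab (f2 k)).2 else 0)).
  apply: eq_bigr => f _; rewrite (eq_bigr _ (fun k _ => label_add (f k))) bigA_distr_bigA /=.
  apply: eq_bigr => f2 _; rewrite prod_if; congr (if _ then _ else _).
  apply/forallP/eqP => [f2f|-> k]; last by rewrite ffunE.
  by apply/ffunP => k; rewrite ffunE (eqP (f2f k)).
rewrite exchange_big /=; apply: eq_bigr => f2 _; rewrite sum_if_eq /split_term.
congr (if _ && _ then _ else _).
  by apply: eq_forallb => k; rewrite ffunE (eab_fst (a + b)).
by apply: eq_forallb => i; apply: eq_existsb => k; rewrite ffunE.
Qed.

Lemma Alab_restrict (q : passage R X Y) (s : option I -> option (option I)) :
  injective s -> (forall o, eab (s o) = oext q e o) -> (forall o, obind id (s o) = o) ->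
  Alab (oext q e) g = \sum_(f : Fun | [forall k, f k \in codom s]) split_term f.
Proof.
move=> s_inj eab_s s_K; rewrite -sum_ffun_comp_inj // /Alab big_mkcond /=.
apply: eq_bigr => f _; rewrite /split_term /split_over /split_covers.
congr (if _ && _ then _ else _).
- by apply: eq_forallb => k; rewrite ffunE eab_s.
- by apply: eq_forallb => i; apply: eq_existsb => k; rewrite ffunE s_K.
- by apply: eq_bigr => k _; rewrite ffunE eab_s.
Qed.

(* A map covering the doubled passage misses the [b]-copy, misses the [a]-copy, or hits both. *)
Lemma split_term_cases (f : Fun) :
  split_term f =
  (if [forall k, f k != Some None] then split_term f else 0) +
  (if [forall k, f k != None] then split_term f else 0) +
  (if split_over f && [forall o, exists k, f k == o] then \prod_k (eab (f k)).2 else 0).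
Proof.
set hitA := [exists k, f k == None]; set hitB := [exists k, f k == Some None].
have onto_split : [forall o, exists k, f k == o] = [&& split_covers f, hitA & hitB].
  apply/idP/idP => [/forallP f_onto|/and3P [/forallP f_cov hA hB]].
    apply/and3P; split; [apply/forallP => o | exact: f_onto None | exact: f_onto (Some None)].
    by have/existsP [k /eqP fk] := f_onto (Some o); apply/existsP; exists k; rewrite fk.
  apply/forallP => -[[i|]|] //; have/existsP [k /eqP fk] := f_cov (Some i).
  by apply/existsP; exists k; case: (f k) fk => [[]|] //= ? ->.
have cov_hit : split_covers f -> hitA || hitB.
  move/forallP/(_ None)/existsP => [k]; case fk: (f k) => [[i|]|] //= _.
    by apply/orP; right; apply/existsP; exists k; rewrite fk.
  by apply/orP; left; apply/existsP; exists k; rewrite fk.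
rewrite onto_split -!negb_exists -/hitA -/hitB /split_term /split_over.
case: [forall k, _] => /=; last by rewrite !if_same !addr0.
case: (boolP (split_covers f)) => /= [/cov_hit|]; last by rewrite !if_same !addr0.
by clear onto_split cov_hit; case: hitA; case: hitB; rewrite /= ?addr0 ?add0r.
Qed.

Lemma Alab_add :
  Alab (oext (x, y, a + b) e) g =
  Alab (oext (x, y, a) e) g + Alab (oext (x, y, b) e) g + Alab eab g.
Proof.
rewrite Alab_add_expand (@Alab_restrict _ (omap Some)) => [|o o'|[]|[]] //; last first.
  by case: o; case: o' => // ? ? [->].
rewrite (@Alab_restrict _ Some) => [|o o' []|[]|] //.
rewrite /Alab [X in _ = X + _ + _]big_mkcond [X in _ = _ + X + _]big_mkcond.
rewrite [X in _ = _ + X]big_mkcond -!big_split /=; apply: eq_bigr => f _ /=.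
rewrite (eq_forallb (fun k => codom_omap_Some (f k))) (eq_forallb (fun k => codom_Some (f k))).
exact: split_term_cases.
Qed.

End LabelSplitting.

Section Relations.
Variables (R : comPzRingType) (n : nat) (X Y : finType).

Lemma An_perm (P P' : seq (passage R X Y)) : perm_eq P P' -> An n P = An n P'.
Proof.
move=> pP; apply/ffunP => mu; have [g g_mu] := exists_labelling (multation_sum mu).
by rewrite !(An_Alab _ g_mu) (Alab_relabel _ (relabel_perm pP)).
Qed.

Lemma An_rcons_zero (P : seq (passage R X Y)) (x : X) (y : Y) :
  An n (rcons P (x, y, 0%R)) = 0%R.
Proof.
apply/ffunP => mu; rewrite !ffunE; apply: big1 => d /and3P [/forallP d_gt0 _ _].
have last_lt : size P < size (rcons P (x, y, 0%R)) by rewrite size_rcons.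
rewrite (bigD1 (Ordinal last_lt)) //= (tnth_nth (x, y, 0%R)) /= nth_rcons ltnn eqxx /=.
by rewrite expr0n; have := d_gt0 (Ordinal last_lt); rewrite lt0n => /negbTE ->; rewrite !mul0r.
Qed.

Lemma An_rcons_add (P : seq (passage R X Y)) (x : X) (y : Y) (a b : R) :
  An n (rcons P (x, y, (a + b)%R)) =
    (An n (rcons P (x, y, a)) + An n (rcons P (x, y, b))
     + An n (P ++ [:: (x, y, a); (x, y, b)]))%R.
Proof.
have An_rcons c : An n (rcons P (x, y, c)) = An n ((x, y, c) :: P).
  by apply: An_perm; rewrite perm_rcons.
have -> : An n (P ++ [:: (x, y, a); (x, y, b)]) = An n ((x, y, a) :: (x, y, b) :: P).
  by apply: An_perm; rewrite perm_catC.
rewrite !An_rcons; apply/ffunP => mu; have [g g_mu] := exists_labelling (multation_sum mu).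
have addE (F G : {ffun multation n X Y -> R}) : (F + G)%R mu = (F mu + G mu)%R by rewrite ffunE.
rewrite !addE !(An_Alab _ g_mu) !(Alab_relabel _ (relabel_cons _ _)).
rewrite (Alab_relabel _ (relabel_oext _ (relabel_cons _ _))).
exact: Alab_add.
Qed.

End Relations.

(** * Identities and composition *)

Section Identity.
Variables (R : comPzRingType) (n : nat) (X : finType).

Lemma Alab_diag (g : 'I_n -> X * X) :
  Alab (fun x => (x, x, 1%R) : passage R X X) g =
  if [forall k, (g k).1 == (g k).2] && [forall x, exists k, (g k).1 == x] then 1%R else 0%R.
Proof.
rewrite /Alab; case: ifP => [/andP [/forallP g_diag /forallP g_onto]|g_nd].
  rewrite (big_pred1 [ffun k => (g k).1]) ?big1 // => f /=.
  apply/andP/eqP => [[/forallP f_over _]|->].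
    by apply/ffunP => k; rewrite ffunE; have /eqP <- := f_over k.
  split; apply/forallP.
    by move=> k; rewrite ffunE {3}[g k]surjective_pairing (eqP (g_diag k)).
  by move=> x; have/existsP [k gk] := g_onto x; apply/existsP; exists k; rewrite ffunE.
rewrite big_pred0 // => f; apply/negbTE/negP => /andP [/forallP f_over /forallP f_onto].
move/negP: g_nd; apply; apply/andP; split; apply/forallP.
  by move=> k; have /eqP <- := f_over k.
by move=> x; have/existsP [k /eqP <-] := f_onto x; apply/existsP; exists k; have /eqP <- := f_over k.
Qed.

Lemma An_id : An n (lid R X) = mid R n X.
Proof.
apply/ffunP => mu; have [g g_mu] := exists_labelling (multation_sum mu).
have diag_relabel : relabel (fun x => (x, x, 1%R) : passage R X X) (occ (lid R X)).
  apply: relabel_trans (relabel_enum _ _).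
  by exists enum_rank => [|x]; rewrite ?enum_rankK //; exact: enum_rank_bij.
rewrite (An_Alab _ g_mu) (Alab_relabel _ diag_relabel) Alab_diag ffunE.
have -> : [forall x, exists k, (g k).1 == x].
  apply/forallP => x; case/and3P: (valP mu) => _ /forallP /(_ x) + _.
  rewrite /rowsum lt0n sum_nat_eq0 negb_forall => /existsP [y].
  by rewrite -lt0n -g_mu fcount_gt0 => /existsP [k /eqP gk]; apply/existsP; exists k; rewrite gk.
congr (if _ then _ else _); rewrite andbT.
apply/forallP/forallP => [g_diag xy|mu_diag k].
  apply/implyP; rewrite -g_mu -leqn0 leqNgt fcount_gt0; apply: contra => /existsP [k /eqP <-].
  exact: g_diag.
apply: contraT => g_nd; have := mu_diag (g k); rewrite g_nd /= -g_mu -leqn0 leqNgt fcount_gt0.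
by case/negP; apply/existsP; exists k.
Qed.

End Identity.

Section Coefficients.
Variables (R : comPzRingType) (n : nat) (X Y : finType).

Definition hcoef (f : {ffun multation n X Y -> R}) (m : X * Y -> nat) : R :=
  (\sum_(nu : multation n X Y | agrees m nu) f nu)%R.

Lemma eq_hcoef f (m m' : X * Y -> nat) : m =1 m' -> hcoef f m = hcoef f m'.
Proof. by move=> mm'; apply: eq_bigl => nu; apply: eq_forallb => xy; rewrite mm'. Qed.

Variable Q : seq (passage R X Y).

Lemma maze_lift_multation (g : 'I_n -> X * Y) (f : {ffun 'I_n -> 'I_(size Q)}) :
  is_maze Q -> [forall k, (occ Q (f k)).1 == g k] -> [forall i, exists k, f k == i] ->
  is_multation (mset_of g).
Proof.
case/andP => /forallP Q_src /forallP Q_tgt /forallP f_over /forallP f_onto.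
have hit p : p \in Q -> 0 < fcount g p.1.
  case/(nthP p) => i i_lt <-; have/existsP [k /eqP fk] := f_onto (Ordinal i_lt).
  by rewrite fcount_gt0; apply/existsP; exists k; rewrite -(eqP (f_over k)) fk (tnth_nth p).
apply/and3P; split.
- by rewrite -[n in _ == n](fcount_sum g); apply/eqP/eq_bigr => xy _; rewrite mset_ofE.
- apply/forallP => x; have/hasP [p pQ /eqP px] := Q_src x.
  rewrite /rowsum (bigD1 p.1.2) //= mset_ofE -px -surjective_pairing.
  exact: leq_trans (hit p pQ) (leq_addr _ _).
- apply/forallP => y; have/hasP [p pQ /eqP py] := Q_tgt y.
  rewrite /colsum (bigD1 p.1.1) //= mset_ofE -py -surjective_pairing.
  exact: leq_trans (hit p pQ) (leq_addr _ _).
Qed.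

Lemma hcoef_An (g : 'I_n -> X * Y) : is_maze Q -> hcoef (An n Q) (fcount g) = Alab (occ Q) g.
Proof.
move=> Q_maze; have [g_mult|g_nmult] := boolP (is_multation (mset_of g)).
  rewrite /hcoef (big_pred1 (exist _ (mset_of g) g_mult)) => [|nu /=].
    by apply: An_Alab => xy; rewrite /= mset_ofE.
  apply/forallP/eqP => [nu_g|-> xy]; last by rewrite /= mset_ofE.
  by apply/val_inj/ffunP => xy; apply/val_inj; rewrite /= mset_ofE; apply/esym/eqP.
rewrite /hcoef big_pred0 => [|nu]; last first.
  apply/negP => /forallP nu_g; move/negP: g_nmult; apply.
  suff -> : mset_of g = val nu by exact: valP.
  by apply/ffunP => xy; apply/val_inj; rewrite /= mset_ofE; apply/eqP.
rewrite /Alab big_pred0 // => f; apply/negP => /andP [f_over f_onto].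
by move/negP: g_nmult; apply; exact: maze_lift_multation f_over f_onto.
Qed.

End Coefficients.

Section Fibres.
Variables (X Y Z : finType).

Lemma sum_fibre13 (F : X * Y * Z -> nat) (xz : X * Z) :
  \sum_(t | (t.1.1, t.2) == xz) F t = \sum_y F (xz.1, y, xz.2).
Proof.
rewrite (reindex (fun y => (xz.1, y, xz.2))) /=; last first.
  by exists (fun t : X * Y * Z => t.1.2) => [y _ //|[[x y] z]]; rewrite inE => /eqP <-.
by apply: eq_bigl => y; rewrite -surjective_pairing eqxx.
Qed.

Lemma sum_fibre12 (F : X * Y * Z -> nat) (xy : X * Y) :
  \sum_(t | t.1 == xy) F t = \sum_z F (xy.1, xy.2, z).
Proof.
rewrite (reindex (fun z => (xy.1, xy.2, z))) /=; last first.
  by exists (fun t : X * Y * Z => t.2) => [z _ //|[[x y] z]]; rewrite inE => /eqP <-.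
by apply: eq_bigl => z; rewrite -surjective_pairing eqxx.
Qed.

Lemma sum_fibre23 (F : X * Y * Z -> nat) (yz : Y * Z) :
  \sum_(t | (t.1.2, t.2) == yz) F t = \sum_x F (x, yz.1, yz.2).
Proof.
rewrite (reindex (fun x => (x, yz.1, yz.2))) /=; last first.
  by exists (fun t : X * Y * Z => t.1.1) => [x _ //|[[x y] z]]; rewrite inE => /eqP <-.
by apply: eq_bigl => x; rewrite -surjective_pairing eqxx.
Qed.

Lemma proj12_mset_of m (f : 'I_m -> X * Y * Z) xy :
  proj12 (mset_of f) xy = fcount (fun k => (f k).1) xy.
Proof.
rewrite -(fcount_push (fun t : X * Y * Z => t.1)) sum_fibre12.
by apply: eq_bigr => z _; rewrite mset_ofE.
Qed.

Lemma proj23_mset_of m (f : 'I_m -> X * Y * Z) yz :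
  proj23 (mset_of f) yz = fcount (fun k => ((f k).1.2, (f k).2)) yz.
Proof.
rewrite -(fcount_push (fun t : X * Y * Z => (t.1.2, t.2))) sum_fibre23.
by apply: eq_bigr => x _; rewrite mset_ofE.
Qed.

End Fibres.

Lemma mcompE (R : comPzRingType) n (X Y Z : finType) (f : {ffun multation n X Y -> R})
    (g : {ffun multation n Y Z -> R}) (rho : multation n X Z) :
  mcomp f g rho = (\sum_(K : mtriples n X Y Z | agrees (proj13 K) rho)
                     (mcoef K)%:R * (hcoef f (proj12 K) * hcoef g (proj23 K)))%R.
Proof.
rewrite ffunE.
under eq_bigr => nu _ do under eq_bigr => mu _ do rewrite big_mkcond.
under eq_bigr => nu _ do rewrite exchange_big.
rewrite exchange_big /= [RHS]big_mkcond; apply: eq_bigr => K _ /=.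
case: (agrees (proj13 K) rho); last first.
  by rewrite big1 // => nu _; rewrite big1 // => mu _; rewrite !andbF.
rewrite /hcoef big_distrl big_distrr [RHS]big_mkcond /=; apply: eq_bigr => nu _.
case: (agrees (proj12 K) nu) => /=; last by rewrite big1.
rewrite big_distrr big_distrr [RHS]big_mkcond /=; apply: eq_bigr => mu _.
by case: (agrees (proj23 K) mu) => //=; rewrite mulrA.
Qed.

Section Composition.
Variables (R : comPzRingType) (n : nat) (X Y Z : finType).
Variables (Q : seq (passage R X Y)) (P : seq (passage R Y Z)) (h : 'I_n -> X * Z).
Local Open Scope ring_scope.

Local Notation IQ := 'I_(size Q).
Local Notation IP := 'I_(size P).
Local Notation Pairs := {ffun 'I_n -> IQ * IP}.

Definition comp_passage (ij : IQ * IP) : passage R X Z :=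
  ((occ Q ij.1).1.1, (occ P ij.2).1.2, (occ P ij.2).2 * (occ Q ij.1).2).

Definition ends_over (H : Pairs) := [forall k, (comp_passage (H k)).1 == h k].
Definition composable (H : Pairs) := [forall k, (occ Q (H k).1).1.2 == (occ P (H k).2).1.1].
Definition covers_both (H : Pairs) :=
  [forall i, exists k, (H k).1 == i] && [forall j, exists k, (H k).2 == j].
Definition pair_weight (H : Pairs) := \prod_k (comp_passage (H k)).2.

Definition comp_sum :=
  \sum_(H : Pairs) if [&& ends_over H, composable H & covers_both H] then pair_weight H else 0.

Definition image_set (H : Pairs) : {set IQ * IP} := [set u | [exists k, H k == u]].

Lemma image_setP (U : {set IQ * IP}) (H : Pairs) :
  [forall k, H k \in U] && [forall u in U, exists k, H k == u] = (U == image_set H).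
Proof.
apply/andP/eqP => [[/forallP H_U /forallP U_H]|->].
  apply/setP => u; rewrite inE; apply/idP/existsP => [uU|[k /eqP <-]]; last exact: H_U.
  by move/implyP: (U_H u) => /(_ uU) /existsP.
split; apply/forallP; first by move=> k; rewrite inE; apply/existsP; exists k.
by move=> u; apply/implyP; rewrite inE.
Qed.

Lemma Alab_umaze (U : {set IQ * IP}) :
  Alab (occ (umaze U)) h =
  \sum_(H : Pairs | [forall k, H k \in U])
     if ends_over H && [forall u in U, exists k, H k == u] then pair_weight H else 0.
Proof.
have codom_U u : (u \in codom (fun j : 'I_#|U| => enum_val j)) = (u \in U).
  apply/codomP/idP => [[j ->]|uU]; first exact: enum_valP.
  by exists (enum_rank_in uU u); rewrite enum_rankK_in.
rewrite (eq_bigl (fun H : Pairs => [forall k, H k \in codom (fun j : 'I_#|U| => enum_val j)])).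
  rewrite -sum_ffun_comp_inj; last exact: enum_val_inj.
  rewrite (Alab_relabel _ (relabel_enum U comp_passage)) /Alab big_mkcond /=.
  apply: eq_bigr => f _; rewrite /ends_over /pair_weight.
  congr (if _ && _ then _ else _).
  - by apply: eq_forallb => k; rewrite ffunE.
  - apply/forallP/forallP => f_onto u.
      apply/implyP => uU; have/existsP [k /eqP fk] := f_onto (enum_rank_in uU u).
      by apply/existsP; exists k; rewrite ffunE fk enum_rankK_in.
    have/implyP/(_ (enum_valP u)) /existsP [k /eqP fk] := f_onto (enum_val u).
    by apply/existsP; exists k; rewrite ffunE in fk; apply/eqP/enum_val_inj.
  - by apply: eq_bigr => k _; rewrite ffunE.
by move=> H; apply: eq_forallb => k; rewrite codom_U.
Qed.

Lemma lvalid_image_set (H : Pairs) : lvalid (image_set H) = composable H && covers_both H.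
Proof.
have inH k : H k \in image_set H by rewrite inE; apply/existsP; exists k.
rewrite /lvalid /covers_both; congr [&& _, _ & _].
- apply/forallP/forallP => H_comp k; first by have := H_comp (H k); rewrite inH.
  by apply/implyP; rewrite inE => /existsP [j /eqP <-].
- apply/forallP/forallP => H_onto i.
    have/existsP [j] := H_onto i; rewrite inE => /existsP [k /eqP Hk].
    by apply/existsP; exists k; rewrite Hk.
  have/existsP [k /eqP Hk] := H_onto i; apply/existsP; exists (H k).2.
  by rewrite -Hk -surjective_pairing.
- apply/forallP/forallP => H_onto j.
    have/existsP [i] := H_onto j; rewrite inE => /existsP [k /eqP Hk].
    by apply/existsP; exists k; rewrite Hk.
  have/existsP [k /eqP Hk] := H_onto j; apply/existsP; exists (H k).1.
  by rewrite -Hk -surjective_pairing.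
Qed.

Lemma An_comp_labelled (rho : multation n X Z) :
  (forall xz, fcount h xz = val rho xz) -> An_comp n Q P rho = comp_sum.
Proof.
move=> h_rho; rewrite /An_comp sum_ffunE.
rewrite (eq_bigr (fun U => \sum_(H : Pairs)
           if U == image_set H then (if ends_over H then pair_weight H else 0) else 0)).
  rewrite exchange_big /=; apply: eq_bigr => H _.
  by rewrite sum_if_eq lvalid_image_set; case: ends_over; case: (_ && _).
move=> U _; rewrite (An_Alab _ h_rho) Alab_umaze big_mkcond /=; apply: eq_bigr => H _.
rewrite -image_setP; case: [forall k, _] => //=.
by case: ends_over; case: [forall u in U, _].
Qed.

Definition triple_of (H : Pairs) : {ffun 'I_n -> X * Y * Z} :=
  [ffun k => ((occ Q (H k).1).1.1, (occ Q (H k).1).1.2, (occ P (H k).2).1.2)].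

Lemma lies_over_triple (H : Pairs) (t : {ffun 'I_n -> X * Y * Z}) :
  [forall k, (occ Q (H k).1).1 == (t k).1] && [forall k, (occ P (H k).2).1 == ((t k).1.2, (t k).2)]
  = (t == triple_of H) && composable H.
Proof.
apply/andP/andP => [[/forallP HQ /forallP HP]|[/eqP -> /forallP H_comp]]; last first.
  split; apply/forallP => k; rewrite ffunE /=; first by rewrite -surjective_pairing.
  by rewrite (eqP (H_comp k)) -surjective_pairing.
split; last first.
  by apply/forallP => k; move: (HQ k) (HP k); case: (t k) => [[x y] z] /= /eqP -> /eqP ->.
apply/eqP/ffunP => k; rewrite ffunE.
by move: (HQ k) (HP k); case: (t k) => [[x y] z] /= /eqP -> /eqP ->.
Qed.

Lemma sum_triples :
  \sum_(t : {ffun 'I_n -> X * Y * Z} | [forall k, ((t k).1.1, (t k).2) == h k])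
     Alab (occ Q) (fun k => (t k).1) * Alab (occ P) (fun k => ((t k).1.2, (t k).2))
  = comp_sum.
Proof.
under eq_bigr => t _ do rewrite Alab_mul.
rewrite exchange_big /=; apply: eq_bigr => H _.
rewrite (eq_bigr (fun t => if t == triple_of H then
    (if composable H && covers_both H then pair_weight H else 0) else 0)) => [|t _].
  rewrite sum_if_eq.
  have -> : [forall k, ((triple_of H k).1.1, (triple_of H k).2) == h k] = ends_over H.
    by apply: eq_forallb => k; rewrite ffunE.
  by case: ends_over.
have -> : \prod_k (occ Q (H k).1).2 * \prod_k (occ P (H k).2).2 = pair_weight H.
  by rewrite /pair_weight big_split mulrC.
rewrite andbACA lies_over_triple -andbA.
by case: (t == _).
Qed.

Lemma mcomp_labelled (rho : multation n X Z) :
  is_maze Q -> is_maze P -> (forall xz, fcount h xz = val rho xz) ->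
  mcomp (An n Q) (An n P) rho = comp_sum.
Proof.
move=> Q_maze P_maze h_rho; rewrite mcompE -sum_triples.
pose G (K : mtriples n X Y Z) := hcoef (An n Q) (proj12 K) * hcoef (An n P) (proj23 K).
rewrite (eq_bigr (fun t : {ffun 'I_n -> X * Y * Z} => G (mset_of t))) => [|t _]; last first.
  by rewrite /G (eq_hcoef _ (proj12_mset_of t)) (eq_hcoef _ (proj23_mset_of t)) !hcoef_An.
pose pi13 (t : X * Y * Z) := (t.1.1, t.2).
have fibre13 (K : mtriples n X Y Z) xz : proj13 K xz = (\sum_(t | pi13 t == xz) K t)%N.
  by rewrite sum_fibre13.
rewrite (sum_lifts_mset pi13); apply: eq_big => [K|K _].
  by apply: eq_forallb => xz; rewrite -fibre13 h_rho.
rewrite mulr_natl; congr (_ *+ _); rewrite /mcoef /multinomial.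
by congr (_ %/ _)%N; apply: eq_bigr => xz _; rewrite fibre13.
Qed.

End Composition.

Lemma An_comp_mcomp (R : comPzRingType) n (X Y Z : finType)
    (Q : seq (passage R X Y)) (P : seq (passage R Y Z)) :
  is_maze Q -> is_maze P -> An_comp n Q P = mcomp (An n Q) (An n P).
Proof.
move=> Q_maze P_maze; apply/ffunP => rho.
have [h h_rho] := exists_labelling (multation_sum rho).
by rewrite (An_comp_labelled Q P h_rho) (mcomp_labelled Q_maze P_maze h_rho).
Qed.

Theorem mainTheorem8 (R : comPzRingType) (n : nat) :
  (forall (X Y : finType) (P P' : seq (passage R X Y)),
      is_maze P -> perm_eq P P' -> An n P = An n P') /\
  (forall (X Y : finType) (P : seq (passage R X Y)) (x : X) (y : Y),
      is_maze (rcons P (x, y, 0%R)) -> An n (rcons P (x, y, 0%R)) = 0%R) /\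
  (forall (X Y : finType) (P : seq (passage R X Y)) (x : X) (y : Y) (a b : R),
      is_maze (rcons P (x, y, (a + b)%R)) ->
      An n (rcons P (x, y, (a + b)%R)) =
        (An n (rcons P (x, y, a)) + An n (rcons P (x, y, b))
         + An n (P ++ [:: (x, y, a); (x, y, b)]))%R) /\
  (forall X : finType, An n (lid R X) = mid R n X) /\
  (forall (X Y Z : finType) (Q : seq (passage R X Y)) (P : seq (passage R Y Z)),
      is_maze Q -> is_maze P -> An_comp n Q P = mcomp (An n Q) (An n P)).
Proof.
split; [|split; [|split; [|split]]].
- by move=> X Y P P' _; exact: An_perm.
- by move=> X Y P x y _; exact: An_rcons_zero.
- by move=> X Y P x y a b _; exact: An_rcons_add.
- by move=> X; exact: An_id.
- by move=> X Y Z Q P; exact: An_comp_mcomp.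
Qed.
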